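(* Let $a,b,c,d\in\mathbb C$ with $a\notin\mathbb Z$ and $d\notin\{0,-1,-2,\dots\}$. Then, as an identity of formal power series in $x,y$, $${}_1F_1(a;d;x)\,F(b,c;1-a;y)=\mathrm H_{11}(a,b,c;d;x,-y)+\sum_{k=1}^\infty\sum_{l=1}^k\frac{(-1)^{k-l}(k-1)!}{(l-1)!\,l!\,(k-l)!}\,\frac{(b)_k(c)_k}{(1-a)_k(1-a)_{k-l}(d)_l}\,x^ly^k\,\mathrm H_{11}(a-k+l,b+k,c+k;d+l;x,-y).$$
   Context: Pochhammer symbol: $(\lambda)_k=\Gamma(\lambda+k)/\Gamma(\lambda)$ for every integer $k$ (possibly negative) whenever defined; $(\lambda)_0=1$. $F(a,b;c;x)=\sum_{k\ge0}\frac{(a)_k(b)_k}{(c)_k k!}x^k$, ${}_1F_1(a;c;x)=\sum_{k\ge0}\frac{(a)_k}{(c)_k k!}x^k$. Confluent Horn function $\mathrm H_{11}(a,b,c;d;x,y)=\sum_{p,q\ge0}\frac{(a)_{p-q}(b)_q(c)_q}{(d)_p\,p!\,q!}x^py^q$. All functions are regarded as formal power series in $x,y$; the infinite double sum converges in the formal (degree) topology. *)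

From HB Require Import structures.
From mathcomp Require Import all_boot all_order all_algebra.
Set Implicit Arguments. Unset Strict Implicit. Unset Printing Implicit Defensive.
Import Order.TTheory GRing.Theory Num.Theory.
Local Open Scope ring_scope.

(* Pochhammer symbol (l)_k for k : int.
   (l)_n = l (l+1) ... (l+n-1) for n >= 0,
   (l)_{-m} = Gamma(l-m)/Gamma(l) = 1/((l-1)(l-2)...(l-m)) for m >= 1
   (Negz n denotes -(n+1)). *)
Definition poch {F : fieldType} (l : F) (k : int) : F :=
  match k with
  | Posz n => \prod_(i < n) (l + i%:R)
  | Negz n => (\prod_(i < n.+1) (l - (i.+1)%:R))^-1
  end.

(* Formal power series in two variables x, y over F, given by coefficients:
   f p q = coefficient of x^p y^q. *)
Definition fps (F : Type) := nat -> nat -> F.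

Definition fps_mul {F : fieldType} (f g : fps F) : fps F :=
  fun p q => \sum_(i < p.+1) \sum_(j < q.+1) f i j * g (p - i)%N (q - j)%N.

Definition fps_add {F : fieldType} (f g : fps F) : fps F :=
  fun p q => f p q + g p q.

Definition fps_scale {F : fieldType} (c : F) (f : fps F) : fps F :=
  fun p q => c * f p q.

Definition fps_shift {F : fieldType} (l k : nat) (f : fps F) : fps F :=
  fun p q => if ((l <= p) && (k <= q))%N then f (p - l)%N (q - k)%N else 0.

Definition hyp1F1 {F : fieldType} (a c : F) : fps F :=
  fun p q => if q == 0%N then poch a p%:Z / (poch c p%:Z * (p`!)%:R) else 0.

Definition hyp2F1y {F : fieldType} (a b c : F) : fps F :=
  fun p q => if p == 0%N then
     poch a q%:Z * poch b q%:Z / (poch c q%:Z * (q`!)%:R) else 0.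

(* H11(a,b,c;d;x,s*y): the confluent Horn function with y replaced by s*y
   (s = -1 gives H11(a,b,c;d;x,-y)). *)
Definition H11 {F : fieldType} (a b c d s : F) : fps F :=
  fun p q => poch a (p%:Z - q%:Z) * poch b q%:Z * poch c q%:Z
             / (poch d p%:Z * (p`!)%:R * (q`!)%:R) * s ^+ q.

Definition rhs_term {F : fieldType} (a b c d : F) (k l : nat) : fps F :=
  fps_scale
    ((-1) ^+ (k - l) * ((k.-1)`!)%:R / (((l.-1)`!)%:R * (l`!)%:R * ((k - l)`!)%:R)
     * (poch b k%:Z * poch c k%:Z
        / (poch (1 - a) k%:Z * poch (1 - a) (k - l)%N%:Z * poch d l%:Z)))
    (fps_shift l k (H11 (a - k%:R + l%:R) (b + k%:R) (c + k%:R) (d + l%:R) (-1))).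

(* Since rhs_term k l has
   y-adic order >= k, only terms with k <= q contribute to the coefficient of
   x^p y^q; the coefficient of the (formally convergent) sum is therefore this
   finite sum. *)
Definition rhs_sum {F : fieldType} (a b c d : F) : fps F :=
  fun p q => \sum_(1 <= k < q.+1) \sum_(1 <= l < k.+1) rhs_term a b c d k l p q.

(* Compare coefficients of x^p y^q.  Every term is a multiple of the
   coefficient h of x^p y^q in H11(a,b,c;d;x,-y): the (k,l)-term of the double
   sum contributes h C(p,l) C(k-1,l-1) C(q,k) (-1)^k k! / (1-a)_k, and
   Vandermonde's identity sums it over l to h C(q,k) (-1)^k (p)_k / (1-a)_k.
   Adding the k = 0 term H11 itself gives h times the terminating series
   2F1(-q,p;1-a;1) = (1-a-p)_q / (1-a)_q (Chu-Vandermonde), and the reflection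
   (a)_p = (-1)^q (a)_(p-q) (1-a-p)_q turns h (1-a-p)_q / (1-a)_q into the
   coefficient of the product on the left. *)

From HB Require Import structures.
From mathcomp Require Import all_boot all_order all_algebra.
From mathcomp Require Import ring zify.
From Stdlib Require Import FunctionalExtensionality.
Import Order.TTheory GRing.Theory Num.Theory.
Local Open Scope ring_scope.

Section Pochhammer.
Context {F : fieldType}.
Implicit Types (x c : F) (m n p q : nat).

Definition nonintegral x := forall z : int, x != z%:~R.

Lemma nonintegral_addz_neq0 [x] (z : int) : nonintegral x -> x + z%:~R != 0.
Proof. by move=> hx; rewrite addr_eq0 -mulrNz hx. Qed.

Lemma nonintegral_addz [x] (w : int) : nonintegral x -> nonintegral (x + w%:~R).
Proof. by move=> hx z; rewrite -subr_eq0 -addrA -rmorphB nonintegral_addz_neq0. Qed.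

Lemma nonintegral_subn [x] n : nonintegral x -> nonintegral (x - n%:R).
Proof. by move=> hx; have := nonintegral_addz (- n%:Z) hx; rewrite intrN -pmulrn. Qed.

Lemma nonintegral_1B [x] : nonintegral x -> nonintegral (1 - x).
Proof.
move=> hx z; apply: contra (hx (1 - z)) => /eqP h.
by rewrite rmorphB /= -h opprB addrC subrK.
Qed.

Lemma poch0 x : poch x 0%:Z = 1.
Proof. by rewrite /poch big_ord0. Qed.

Lemma pochSn x n : poch x n.+1%:Z = poch x n%:Z * (x + n%:R).
Proof. by rewrite /poch big_ord_recr. Qed.

Lemma pochnD x m n : poch x (m + n)%N%:Z = poch x m%:Z * poch (x + m%:R) n%:Z.
Proof.
elim: n => [|n IH]; first by rewrite addn0 poch0 mulr1.
by rewrite addnS !pochSn IH natrD mulrA addrA.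
Qed.

Lemma poch_split x [m n] : (m <= n)%N ->
  poch x n%:Z = poch x m%:Z * poch (x + m%:R) (n - m)%:Z.
Proof. by move=> hmn; rewrite -pochnD subnKC. Qed.

Lemma pochSr x n : poch x n.+1%:Z = x * poch (x + 1) n%:Z.
Proof. by rewrite -add1n pochnD /poch big_ord1 addr0. Qed.

Lemma poch_neq0 [x] n : (forall i : nat, x + i%:R != 0) -> poch x n%:Z != 0.
Proof. by move=> hx; rewrite /poch prodf_seq_neq0; apply/allP => i _; apply: hx. Qed.

Lemma nonintegral_addn_neq0 [x] n : nonintegral x -> x + n%:R != 0.
Proof. by move=> hx; rewrite pmulrn nonintegral_addz_neq0. Qed.

Lemma nonintegral_poch_neq0 [x] n : nonintegral x -> poch x n%:Z != 0.
Proof. by move=> hx; apply: poch_neq0 => i; apply: nonintegral_addn_neq0. Qed.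

(* For negative indices [poch] is an inverse, which is a junk value unless x is
   not an integer; hence the hypothesis. *)
Lemma pochS x (n : int) : nonintegral x -> poch x (n + 1) = poch x n * (x + n%:~R).
Proof.
move=> hx; case: n => [n|n]; first by rewrite -PoszD addn1 pochSn.
have hxn := nonintegral_addz_neq0 (Negz n) hx; rewrite NegzE mulrNz in hxn.
case: n hxn => [|n] hxn.
  by rewrite (_ : Negz 0 + 1 = 0%:Z) // poch0 /poch big_ord1 NegzE mulrNz mulVf.
have -> : Negz n.+1 + 1 = Negz n by rewrite !NegzE; lia.
by rewrite /poch (big_ord_recr n.+1) invfM NegzE mulrNz -mulrA mulVf ?mulr1.
Qed.

Lemma pochD x (m n : int) : nonintegral x ->
  poch x (m + n) = poch x m * poch (x + m%:~R) n.
Proof.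
move=> hx; have hxm := nonintegral_addz m hx.
elim/int_rect: n => [|n IH|n IH]; first by rewrite addr0 poch0 mulr1.
- by rewrite -addn1 PoszD addrA !pochS // IH rmorphD addrA mulrA.
- have e1 : m - n%:Z = (m - (n.+1)%:Z) + 1 by lia.
  have e2 : - n%:Z = - (n.+1)%:Z + 1 by lia.
  move: IH; rewrite e1 e2 !pochS // => IH.
  apply: (mulIf (nonintegral_addz_neq0 (m - n.+1%:Z) hx)).
  by rewrite IH rmorphD addrA mulrA.
Qed.

Lemma poch_subnn x m : poch (x - m%:R) m%:Z = (-1) ^+ m * poch (1 - x) m%:Z.
Proof.
rewrite /poch (reindex_inj rev_ord_inj) -[m in (-1) ^+ m]card_ord -prodrN.
by apply: eq_bigr => i _ /=; rewrite natrB ?ltn_ord //; ring.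
Qed.

Lemma poch_reflect [x] p q : nonintegral x ->
  poch x p%:Z = (-1) ^+ q * poch x (p%:Z - q%:Z) * poch (1 - x - p%:R) q%:Z.
Proof.
move=> hx; rewrite -{1}[p%:Z](subrK q%:Z) [LHS]pochD // intrB -!pmulrn addrA.
by rewrite poch_subnn opprD addrA mulrCA mulrA.
Qed.

Lemma poch_natr n k : poch (n%:R : F) k%:Z = ('C((n + k).-1, k) * k`!)%:R.
Proof.
rewrite bin_ffact ffact_prod /poch natr_prod (reindex_inj rev_ord_inj).
by apply: eq_bigr => i _ /=; rewrite -natrD; congr _%:R; have := ltn_ord i; lia.
Qed.

Lemma sum_pascal q (f : nat -> F) :
  \sum_(k < q.+2) 'C(q.+1, k)%:R * f k = \sum_(k < q.+1) 'C(q, k)%:R * (f k + f k.+1).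
Proof.
rewrite big_ord_recl bin0.
under eq_bigr => i _ do rewrite lift0 binS natrD mulrDl.
rewrite big_split /= addrA.
under [RHS]eq_bigr => i _ do rewrite mulrDr.
rewrite [RHS]big_split /=; congr (_ + _).
rewrite big_ord_recr /= bin_small // mul0r addr0 [RHS]big_ord_recl bin0.
by congr (_ + _); apply: eq_bigr => i _; rewrite lift0.
Qed.

Lemma chu_vandermonde x c q :
  \sum_(k < q.+1) 'C(q, k)%:R * ((-1) ^+ k * poch x k%:Z * poch (c + k%:R) (q - k)%:Z)
  = poch (c - x) q%:Z.
Proof.
elim: q c => [|q IH] c; first by rewrite big_ord1 !poch0 expr0 !mulr1.
have -> : poch (c - x) q.+1%:Z = (c - x) * poch (c + 1 - x) q%:Z.
  by rewrite pochSr addrAC.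
rewrite (sum_pascal q
  (fun k => (-1) ^+ k * poch x k%:Z * poch (c + k%:R) (q.+1 - k)%:Z)).
rewrite -(IH (c + 1)) mulr_sumr; apply: eq_bigr => k _.
have hk : (k <= q)%N by rewrite -ltnS.
rewrite subSS subSn // pochSr pochSn exprS.
have -> : c + k.+1%:R = c + 1 + k%:R by rewrite -addn1 natrD addrAC addrA.
have -> : c + k%:R + 1 = c + 1 + k%:R by rewrite addrAC.
ring.
Qed.

Lemma chu_vandermonde_div x c q : (forall i : nat, c + i%:R != 0) ->
  \sum_(k < q.+1) 'C(q, k)%:R * ((-1) ^+ k * poch x k%:Z / poch c k%:Z)
  = poch (c - x) q%:Z / poch c q%:Z.
Proof.
move=> hc; rewrite -chu_vandermonde mulr_suml; apply: eq_bigr => k _.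
have hk : (k <= q)%N by rewrite -ltnS.
have hck : poch (c + k%:R) (q - k)%:Z != 0.
  by apply: poch_neq0 => i; rewrite -addrA -natrD.
rewrite (poch_split c hk).
by field; rewrite hck poch_neq0.
Qed.

End Pochhammer.

Lemma Vandermonde_pred p k : (0 < k)%N ->
  (\sum_(1 <= l < k.+1) 'C(p, l) * 'C(k.-1, k - l) = 'C((p + k).-1, k))%N.
Proof.
case: k => // k _; rewrite addnS -binomial.Vandermonde big_ord_recl.
rewrite subn0 (@bin_small k k.+1) // muln0 add0n big_add1 big_mkord.
by apply: eq_bigr => l _; rewrite lift0.
Qed.

Lemma fps_mul_separated (F : fieldType) (f g : fps F) p q :
    (forall i j, (0 < j)%N -> f i j = 0) -> (forall i j, (0 < i)%N -> g i j = 0) ->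
  fps_mul f g p q = f p 0%N * g 0%N q.
Proof.
move=> f0 g0; rewrite /fps_mul big_ord_recr /= big1 ?add0r => [|i _]; last first.
  by apply: big1 => j _; rewrite g0 ?mulr0 // subn_gt0.
rewrite big_ord_recl big1 ?addr0 => [|j _]; last by rewrite f0 ?mul0r.
by rewrite !subnn !subn0.
Qed.

Section HornCoefficients.
Context {F : fieldType} (a b c d : F).
Hypothesis F_char0 : has_pchar0 F.
Hypothesis a_nonint : nonintegral a.
Hypothesis d_neqNn : forall n : nat, d != - n%:R.
Implicit Types (k l p q : nat).

Lemma natr_neq0 n : (0 < n)%N -> n%:R != 0 :> F.
Proof. by rewrite (pcharf0P F).1 // -lt0n. Qed.

Lemma fact_natr_neq0 n : n`!%:R != 0 :> F.
Proof. exact/natr_neq0/fact_gt0. Qed.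

Lemma bin_natr_neq0 n k : (k <= n)%N -> 'C(n, k)%:R != 0 :> F.
Proof. by rewrite -bin_gt0; apply: natr_neq0. Qed.

Lemma d_addn_neq0 n : d + n%:R != 0.
Proof. by rewrite addr_eq0 d_neqNn. Qed.

Lemma coef_lhs p q :
  fps_mul (hyp1F1 a d) (hyp2F1y b c (1 - a)) p q
  = H11 a b c d (-1) p q * (poch (1 - a - p%:R) q%:Z / poch (1 - a) q%:Z).
Proof.
rewrite fps_mul_separated => [|i [] //|[] //].
rewrite /hyp1F1 /hyp2F1y /H11 !eqxx (poch_reflect p q a_nonint).
have hd := poch_neq0 p d_addn_neq0.
have ha := nonintegral_poch_neq0 q (nonintegral_1B a_nonint).
by field; rewrite hd ha !fact_natr_neq0.
Qed.

Lemma coef_rhs_term k l p q : (0 < l)%N -> (l <= k <= q)%N ->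
  rhs_term a b c d k l p q = H11 a b c d (-1) p q *
    (('C(p, l) * 'C(k.-1, k - l))%:R *
     (('C(q, k) * k`!)%:R * (-1) ^+ k / poch (1 - a) k%:Z)).
Proof.
move=> hl /andP[hlk hkq].
(* The sign (-1)^(k-l) will occur twice on the left and (-1)^k twice on the
   right; writing one copy of each as its inverse lets [field] cancel them. *)
rewrite /rhs_term /fps_scale /fps_shift hkq andbT -(invr_sign _ (k - l)) -(invr_sign _ k).
have [hlp|hpl] := leqP l p; last by rewrite bin_small // !(mul0n, mul0r, mulr0).
have -> : a - k%:R + l%:R = a - (k - l)%:R by rewrite natrB //; ring.
rewrite /H11.
have -> : ((p - l)%:Z - (q - k)%:Z) = (k - l)%:Z + (p%:Z - q%:Z) by lia.
rewrite pochD; last exact: nonintegral_subn.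
rewrite -pmulrn subrK poch_subnn.
rewrite (poch_split b hkq) (poch_split c hkq) (poch_split d hlp).
rewrite -(bin_fact hlp) -(bin_fact hkq) -[k.-1`!](bin_fact (_ : k - l <= k.-1)%N); last by lia.
rewrite (_ : k.-1 - (k - l) = l.-1)%N; last by lia.
rewrite -[in (-1) ^+ q](subnK hkq) exprD !natrM.
have hak := nonintegral_poch_neq0 k (nonintegral_1B a_nonint).
have hakl := nonintegral_poch_neq0 (k - l) (nonintegral_1B a_nonint).
have hdl := poch_neq0 l d_addn_neq0.
have hdlp : poch (d + l%:R) (p - l)%:Z != 0.
  by apply: poch_neq0 => i; rewrite -addrA -natrD d_addn_neq0.
field; rewrite hak hakl hdl hdlp !fact_natr_neq0 !bin_natr_neq0 //=.
by rewrite !expf_eq0 oppr_eq0 oner_eq0 !andbF.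
Qed.

Lemma coef_rhs_sum p q : rhs_sum a b c d p q = H11 a b c d (-1) p q *
  \sum_(1 <= k < q.+1) 'C(q, k)%:R * ((-1) ^+ k * poch p%:R k%:Z / poch (1 - a) k%:Z).
Proof.
rewrite /rhs_sum mulr_sumr; apply: eq_big_nat => k /andP[hk /[!ltnS] hkq].
under eq_big_nat => l /andP[hl /[!ltnS] hlk] do rewrite coef_rhs_term ?hlk //.
rewrite -mulr_sumr -mulr_suml -natr_sum Vandermonde_pred // poch_natr !natrM.
ring.
Qed.

End HornCoefficients.

Theorem mainTheorem13 (C : numClosedFieldType) (a b c d : C)
  (ha : forall n : int, a != n%:~R)
  (hd : forall n : nat, d != - n%:R) :
  fps_mul (hyp1F1 a d) (hyp2F1y b c (1 - a))
  = fps_add (H11 a b c d (-1)) (rhs_sum a b c d).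
Proof.
apply: functional_extensionality => p; apply: functional_extensionality => q.
have C_char0 := pchar_num C.
rewrite (coef_lhs a b c d C_char0 ha hd) /fps_add (coef_rhs_sum a b c d C_char0 ha hd).
rewrite -chu_vandermonde_div => [|i]; last exact/nonintegral_addn_neq0/nonintegral_1B.
rewrite big_ord_recl big_add1 succnK big_mkord mulrDr; congr (_ + _ * _).
by rewrite bin0 expr0 !poch0 divr1 !mulr1.
Qed.
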